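(* Let $G$ be an $X-Y$ normalized graph, let $S \subseteq N(X)$, and assume that no vertex of $S$ is adjacent to a vertex of $Y$. Then there is $S' \subseteq S$ such that $|S'| \leq CE(S)$ and $K(S')=K(S)$.
   Context: $G$ is a finite undirected graph and $X,Y$ are disjoint subsets of $V(G)$; $N(C)=(\bigcup_{v\in C}N(v))\setminus C$. An $X-Y$ separator is a set $K \subseteq V(G) \setminus (X \cup Y)$ such that $G \setminus K$ has no path from $X$ to $Y$; minimal means inclusion-minimal. $G$ is $X-Y$ normalized if $N(X)$ is the only minimum-cardinality $X-Y$ separator. Let $r$ be the minimum size of an $X-Y$ separator; the excess of an $X-Y$ separator $K$ is $|K|-r$. For $S\subseteq N(X)$, the cover excess $CE(S)$ is the excess of a smallest $X-Y$ separator disjoint with $S$. An $X-Y$ separator $K$ with $K\cap S=\emptyset$ and excess $CE(S)$ is a witness of $S$. $NR(G,Y,K)$ is the set of vertices not reachable from $Y$ in $G\setminus K$; $K \geq K'$ means $NR(G,Y,K)\supseteq NR(G,Y,K')$, and $K'<K$ means $K\geq K'$ and $NR(G,Y,K)\ne NR(G,Y,K')$. A minimal $X-Y$ separator $K$ is important if there is no $X-Y$ separator $K'$ with $K<K'$ and $|K|\geq|K'|$. An important witness of $S$ is a witness of $S$ that is an important $X-Y$ separator; for $S\subseteq N(X)$ not adjacent to $Y$ it exists and is unique, denoted $K(S)$. *)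

From mathcomp Require Import all_boot.
Set Implicit Arguments. Unset Strict Implicit. Unset Printing Implicit Defensive.

(* A finite undirected graph: vertex type T, adjacency e (assumed symmetric
   and irreflexive in the theorem), X Y disjoint vertex sets. *)
Section Separators.
Variables (T : finType) (e : rel T) (X Y : {set T}).

Definition nbr (v : T) : {set T} := [set u | e v u].
Definition nbrs (C : {set T}) : {set T} := (\bigcup_(v in C) nbr v) :\: C.

Definition erem (K : {set T}) : rel T :=
  [rel u v | [&& e u v, u \notin K & v \notin K]].

(* v is reachable from u in G \ K (u itself must be a vertex of G \ K) *)
Definition reach (K : {set T}) (u v : T) : bool :=
  (u \notin K) && connect (erem K) u v.

Definition separator (K : {set T}) : bool :=
  (K \subset ~: (X :|: Y)) &&
  [forall x in X, forall y in Y, ~~ reach K x y].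

Definition minimal_separator (K : {set T}) : bool :=
  separator K && [forall K' : {set T}, (K' \proper K) ==> ~~ separator K'].

(* r = minimum size of an X-Y separator (default #|T| if none exists) *)
Definition rmin : nat :=
  \big[minn/#|T|]_(K : {set T} | separator K) #|K|.

Definition excess (K : {set T}) : nat := #|K| - rmin.

Definition normalized : bool :=
  [forall K : {set T}, (separator K && (#|K| == rmin)) == (K == nbrs X)].

Definition CE (S : {set T}) : nat :=
  (\big[minn/#|T|]_(K : {set T} | separator K && [disjoint K & S]) #|K|) - rmin.

Definition witness (S K : {set T}) : bool :=
  [&& separator K, [disjoint K & S] & excess K == CE S].

Definition NR (K : {set T}) : {set T} :=
  [set v | ~~ [exists y in Y, reach K y v]].

Definition sep_le (K K' : {set T}) : bool := NR K \subset NR K'.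
Definition sep_lt (K K' : {set T}) : bool := sep_le K K' && (NR K != NR K').

Definition important (K : {set T}) : bool :=
  minimal_separator K &&
  [forall K' : {set T}, ~~ [&& separator K', sep_lt K K' & #|K'| <= #|K|]].

Definition important_witness (S K : {set T}) : bool :=
  witness S K && important K.

(* K(S): the (unique, when S is not adjacent to Y) important witness of S *)
Definition Kof (S : {set T}) : option {set T} :=
  [pick K : {set T} | important_witness S K].

End Separators.

From HB Require Import structures.
From mathcomp Require Import all_boot zify.
Set Implicit Arguments. Unset Strict Implicit. Unset Printing Implicit Defensive.

(* Write W(K) = Yside K for the set of vertices reachable from Y in G \ K,
   the complement of NR(G,Y,K); a minimal separator K equals N(W(K)), and
   K < K' means that W(K') is strictly smaller than W(K).  The witnesses of S
   are the separators avoiding S of minimum size m(S), and the important one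
   is the witness with the smallest W.  Submodularity of |N(.)| makes it
   unique: for important witnesses K1 and K2 the separators N(W1 :&: W2) and
   N(W1 :|: W2) avoid S and have sizes summing to at most 2 m(S), so
   N(W1 :&: W2) is a witness whose W is inside W1 :&: W2, and importance of K1
   forces W1 \subset W2.
   S' is then built greedily from the empty set: while K(S') meets S, add a
   vertex s of K(S') :&: S to S'.  This increases m strictly, as otherwise
   K(s |: S') would be an important witness of S' avoiding s, contradicting
   uniqueness.  Hence |S'| <= m(S') - r throughout, and once K(S') avoids S it
   is a witness, hence the important witness, of S, with
   |S'| <= m(S) - r = CE(S). *)

HB.instance Definition _ := SemiGroup.isComLaw.Build nat minn minnA minnC.

Lemma bigmin_le (I : finType) (P : pred I) (F : I -> nat) d i :
  P i -> \big[minn/d]_(j | P j) F j <= F i.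
Proof. by move=> Pi; rewrite (bigD1 i) //= geq_minl. Qed.

Lemma bigmin_attained (I : finType) (P : pred I) (F : I -> nat) d i :
  P i -> F i <= d -> exists2 j, P j & \big[minn/d]_(k | P k) F k = F j.
Proof.
move=> Pi Fid; rewrite (bigD1 i) //=.
elim/big_rec: _ => [|k m /andP [Pk _] [j Pj IH]]; first by exists i; last exact/minn_idPl.
by rewrite minnCA IH /minn; case: ifP => _; [exists k | exists j].
Qed.

Section Separators.
Variables (T : finType) (e : rel T) (X Y : {set T}).
Hypothesis e_sym : symmetric e.
Implicit Types (A B C D S K : {set T}).

Local Notation sep := (separator e X Y).
Local Notation N := (nbrs e).

Definition Yside K : {set T} := ~: NR e Y K.

Lemma in_nbrs C v : reflect (v \notin C /\ exists2 u, u \in C & e u v) (v \in N C).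
Proof.
rewrite /nbrs !inE; apply: (iffP andP) => [[vC /bigcupP [u uC]]|[vC [u uC euv]]].
  by rewrite inE => euv; split => //; exists u.
by split => //; apply/bigcupP; exists u; rewrite ?inE.
Qed.

Lemma nbrs_intro C u v : u \in C -> e u v -> v \notin C -> v \in N C.
Proof. by move=> uC euv vC; apply/in_nbrs; split => //; exists u. Qed.

Lemma nbrs_disjoint C : [disjoint N C & C].
Proof. by rewrite disjoints_subset subsetDr. Qed.

Lemma nbrs_closed C : closed (erem e (N C)) (mem C).
Proof.
have side u w : e u w -> u \in C -> w \notin N C -> w \in C.
  by move=> euw uC; apply: contraNT; exact: nbrs_intro uC euw.
move=> u w /and3P [euw uN wN]; apply/idP/idP => [uC|wC].
  exact: side euw uC wN.
by apply: side wC uN; rewrite e_sym.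
Qed.

Lemma erem_sym K : symmetric (erem e K).
Proof. by move=> u v; rewrite /erem /= e_sym [(u \notin K) && _]andbC. Qed.

Lemma reach_notin K y v : reach e K y v -> v \notin K.
Proof.
case/andP => yK yv; have cl : closed (erem e K) [pred w | w \notin K].
  by move=> u w /and3P [_ uK wK]; rewrite !inE uK wK.
by rewrite -[v \notin K]/(v \in [pred w | w \notin K]) -(closed_connect cl yv).
Qed.

Lemma reach_step K y u v : reach e K y u -> e u v -> v \notin K -> reach e K y v.
Proof.
move=> yu euv vK; have uK := reach_notin yu; case/andP: yu => yK yu.
by rewrite /reach yK (connect_trans yu) // connect1 // /erem /= euv uK.
Qed.

Lemma reach_sub K1 K2 u v : K1 \subset K2 -> reach e K2 u v -> reach e K1 u v.
Proof.
move=> /subsetP K12 /andP [uK uv].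
have notin w : w \notin K2 -> w \notin K1 by apply: contra => /K12.
rewrite /reach notin //=; apply: connect_sub uv => a b /and3P [eab aK bK].
by rewrite connect1 // /erem /= eab !notin.
Qed.

Lemma YsideP K v : reflect (exists2 y, y \in Y & reach e K y v) (v \in Yside K).
Proof. rewrite /Yside /NR !inE negbK; exact: exists_inP. Qed.

Lemma Yside_step K u v : u \in Yside K -> e u v -> v \notin K -> v \in Yside K.
Proof.
by case/YsideP => y yY yu euv vK; apply/YsideP; exists y; last exact: reach_step euv vK.
Qed.

Lemma Yside_anti K1 K2 : K1 \subset K2 -> Yside K2 \subset Yside K1.
Proof.
move=> K12; apply/subsetP => v /YsideP [y yY yv].
by apply/YsideP; exists y; last exact: reach_sub yv.
Qed.

Lemma nbrs_Yside_sub K : N (Yside K) \subset K.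
Proof.
apply/subsetP => v /in_nbrs [vW [u uW euv]]; apply: contraR vW; exact: Yside_step euv.
Qed.

Lemma Yside_nbrs C : Y \subset C -> Yside (N C) \subset C.
Proof.
move=> /subsetP YC; apply/subsetP => v /YsideP [y /YC yC /andP [_ yv]].
by rewrite -(closed_connect (@nbrs_closed C) yv).
Qed.

Lemma sep_notinX K x : sep K -> x \in X -> x \notin K.
Proof.
case/andP => /subsetP KXY _ xX; apply: contraL xX => /KXY.
by rewrite !inE negb_or => /andP [].
Qed.

Lemma sep_notinY K y : sep K -> y \in Y -> y \notin K.
Proof.
case/andP => /subsetP KXY _ yY; apply: contraL yY => /KXY.
by rewrite !inE negb_or => /andP [].
Qed.

Lemma sep_connect K x y : sep K -> x \in X -> y \in Y -> ~~ connect (erem e K) x y.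
Proof.
move=> sK xX yY; case/andP: (sK) => _ /forall_inP/(_ x xX)/forall_inP/(_ y yY).
by rewrite /reach (sep_notinX sK xX).
Qed.

Lemma Yside_notinX K x : sep K -> x \in X -> x \notin Yside K.
Proof.
move=> sK xX; apply/YsideP => -[y yY /andP [_ yx]].
by move: (sep_connect sK xX yY); rewrite (sym_connect_sym (erem_sym K)) yx.
Qed.

Lemma Y_sub_Yside K : sep K -> Y \subset Yside K.
Proof.
move=> sK; apply/subsetP => y yY; apply/YsideP; exists y => //.
by rewrite /reach (sep_notinY sK yY) connect0.
Qed.

Lemma sep_nbrs C : N C \subset ~: (X :|: Y) ->
  {in X & Y, forall x y, (x \in C) != (y \in C)} -> sep (N C).
Proof.
move=> NC XYC; rewrite /separator NC; apply/forall_inP => x xX; apply/forall_inP => y yY.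
apply/negP => /andP [_ xy].
by move: (XYC x y xX yY); rewrite (closed_connect (@nbrs_closed C) xy) eqxx.
Qed.

Lemma sep_nbrs_Yside K : sep K -> sep (N (Yside K)) /\ Yside (N (Yside K)) = Yside K.
Proof.
move=> sK; split.
  apply: sep_nbrs.
    by case/andP: sK => KXY _; apply: subset_trans KXY; exact: nbrs_Yside_sub.
  by move=> x y xX yY; rewrite (negbTE (Yside_notinX sK xX)) (subsetP (Y_sub_Yside sK)).
apply/eqP; rewrite eqEsubset Yside_nbrs ?Y_sub_Yside //; exact/Yside_anti/nbrs_Yside_sub.
Qed.

Lemma minimal_separatorE K : minimal_separator e X Y K -> K = N (Yside K).
Proof.
case/andP => sK /forall_inP minK; have [sN _] := sep_nbrs_Yside sK.
apply/eqP; rewrite eq_sym eqEproper nbrs_Yside_sub /=.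
by apply: contraL sN => /minK.
Qed.

Lemma nbrsI_sub A B : N (A :&: B) \subset N A :|: N B.
Proof.
apply/subsetP => v /in_nbrs [vAB [u /setIP [uA uB] euv]]; rewrite in_setU.
have [vA|vA] := boolP (v \in A); last by rewrite (nbrs_intro uA euv vA).
have vB : v \notin B by apply: contra vAB => vB; rewrite in_setI vA.
by rewrite (nbrs_intro uB euv vB) orbT.
Qed.

Lemma nbrsU_sub A B : N (A :|: B) \subset N A :|: N B.
Proof.
apply/subsetP => v /in_nbrs [vAB [u uAB euv]]; rewrite in_setU.
move: vAB; rewrite in_setU => /norP [vA vB]; case/setUP: uAB => [uA|uB].
  by rewrite (nbrs_intro uA euv vA).
by rewrite (nbrs_intro uB euv vB) orbT.
Qed.

Lemma nbrs_submod A B : #|N (A :&: B)| + #|N (A :|: B)| <= #|N A| + #|N B|.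
Proof.
have NIU : N (A :&: B) :&: N (A :|: B) \subset N A :&: N B.
  apply/subsetP => v /setIP [/in_nbrs [_ [u /setIP [uA uB] euv]] /in_nbrs [vAB _]].
  move: vAB; rewrite in_setU => /norP [vA vB].
  by rewrite in_setI (nbrs_intro uA euv vA) (nbrs_intro uB euv vB).
rewrite -cardsUI -(cardsUI (N A)) leq_add ?subset_leq_card //.
by rewrite subUset nbrsI_sub nbrsU_sub.
Qed.

Lemma sep_ltE K K' : sep_lt e Y K K' = (Yside K' \proper Yside K).
Proof. by rewrite /sep_lt /sep_le properEneq andbC (inj_eq (@setC_inj _)) eq_sym setCS. Qed.

Lemma importantP K :
  reflect (minimal_separator e X Y K /\
           forall K', sep K' -> Yside K' \proper Yside K -> #|K| < #|K'|)
          (important e X Y K).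
Proof.
apply: (iffP andP) => -[mK impK]; split => //.
  move=> K' sK' ltK'; move/forallP/(_ K'): impK.
  by rewrite sep_ltE sK' ltK' ltnNge.
apply/forallP => K'; rewrite sep_ltE.
by apply/negP => /and3P [sK' ltK']; rewrite leqNgt impK.
Qed.

Lemma rmin_le K : sep K -> rmin e X Y <= #|K|.
Proof. exact: bigmin_le. Qed.

Definition msep S : nat :=
  \big[minn/#|T|]_(K : {set T} | sep K && [disjoint K & S]) #|K|.

Lemma msep_le S K : sep K -> [disjoint K & S] -> msep S <= #|K|.
Proof. by move=> sK dK; apply: bigmin_le; rewrite sK. Qed.

Lemma msep_attained S K : sep K -> [disjoint K & S] ->
  exists2 K0, sep K0 && [disjoint K0 & S] & msep S = #|K0|.
Proof. by move=> sK dK; apply: (bigmin_attained (i := K)) (max_card _); rewrite /= sK. Qed.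

Lemma msep_mono S1 S2 K : S1 \subset S2 -> sep K -> [disjoint K & S2] ->
  msep S1 <= msep S2.
Proof.
move=> S12 sK dK; have [K0 /andP [sK0 dK0] ->] := msep_attained sK dK.
by apply: msep_le sK0 _; exact: disjointWr dK0.
Qed.

Lemma witnessE S K : witness e X Y S K = [&& sep K, [disjoint K & S] & #|K| == msep S].
Proof.
rewrite /witness /excess /CE -/(msep S).
have [sK|] := boolP (sep K); have [dK|] //= := boolP [disjoint K & S].
have [K0 /andP [sK0 _] mS] := msep_attained sK dK.
have := rmin_le sK0; have := msep_le sK dK; rewrite mS => ? ?; apply/eqP/eqP; lia.
Qed.

Lemma witness_sup S1 S2 K : S1 \subset S2 -> witness e X Y S1 K -> [disjoint K & S2] ->
  witness e X Y S2 K.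
Proof.
rewrite !witnessE => S12 /and3P [sK _ /eqP cK] dK; rewrite sK dK eqn_leq msep_le //=.
by rewrite cK (msep_mono S12 sK dK).
Qed.

Lemma witness_sub S1 S2 K : S1 \subset S2 -> msep S2 <= msep S1 -> witness e X Y S2 K ->
  witness e X Y S1 K.
Proof.
rewrite !witnessE => S12 m21 /and3P [sK dK /eqP cK].
have dK1 := disjointWr S12 dK; rewrite sK dK1 eqn_leq msep_le //=.
by rewrite andbT cK.
Qed.

Lemma nbrsX_notin_Yside K v : sep K -> v \in N X -> v \notin K -> v \notin Yside K.
Proof.
move=> sK /in_nbrs [_ [x xX exv]] vK; apply: contraTN (Yside_notinX sK xX) => vW.
have evx : e v x by rewrite e_sym.
by rewrite negbK (Yside_step vW evx (sep_notinX sK xX)).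
Qed.

Lemma witness_nbrs_Yside S K K' : S \subset N X -> witness e X Y S K -> sep K' ->
  Yside K' \subset Yside K -> #|K'| <= #|K| -> witness e X Y S (N (Yside K')).
Proof.
rewrite !witnessE => SX /and3P [sK dK /eqP cK] sK' W'K cK'.
have [sN _] := sep_nbrs_Yside sK'.
have dN : [disjoint N (Yside K') & S].
  rewrite disjoint_sym disjoints_subset; apply/subsetP => s sS; rewrite inE.
  apply/in_nbrs => -[_ [u /(subsetP W'K) uW eus]].
  have sKf : s \notin K by rewrite (disjointFl dK sS).
  have := nbrsX_notin_Yside sK (subsetP SX s sS) sKf.
  by rewrite (Yside_step uW eus sKf).
rewrite sN dN eqn_leq msep_le //= andbT -cK.
exact: leq_trans (subset_leq_card (nbrs_Yside_sub K')) cK'.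
Qed.

Lemma important_witness_exists S K0 :
  S \subset N X -> sep K0 -> [disjoint K0 & S] -> exists K, important_witness e X Y S K.
Proof.
move=> SX sK0 dK0; have [K1 /andP [sK1 dK1] cK1] := msep_attained sK0 dK0.
have w1 : witness e X Y S K1 by rewrite witnessE sK1 dK1 cK1 eqxx.
have [K wK minK] := arg_minnP (fun K => #|Yside K|) w1.
exists K; rewrite /important_witness wK.
move: (wK); rewrite witnessE => /and3P [sK dK /eqP cK].
apply/importantP; split.
  rewrite /minimal_separator sK; apply/forall_inP => K' ltK'.
  apply: contraL (proper_card ltK') => sK'.
  by rewrite -leqNgt cK msep_le // (disjointWl (proper_sub ltK') dK).
move=> K' sK' ltW; rewrite ltnNge; apply: contraL (proper_card ltW) => cK'.
have [_ EW] := sep_nbrs_Yside sK'.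
by rewrite -leqNgt -{1}EW minK // (witness_nbrs_Yside SX wK sK' (proper_sub ltW) cK').
Qed.

Lemma important_witness_Yside_sub S K1 K2 :
  important_witness e X Y S K1 -> important_witness e X Y S K2 -> Yside K1 \subset Yside K2.
Proof.
rewrite /important_witness !witnessE.
case/andP => /and3P [sK1 dK1 /eqP cK1] /importantP [mK1 impK1].
case/andP => /and3P [sK2 dK2 /eqP cK2] /importantP [mK2 _].
have EK1 := minimal_separatorE mK1; have EK2 := minimal_separatorE mK2.
set W1 := Yside K1 in EK1 impK1 *; set W2 := Yside K2 in EK2 *.
have KXY : K1 :|: K2 \subset ~: (X :|: Y).
  by rewrite subUset; case/andP: sK1 => -> _; case/andP: sK2.
have KS : [disjoint K1 :|: K2 & S].
  by rewrite disjoints_subset subUset -!disjoints_subset dK1 dK2.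
have NW : N W1 :|: N W2 = K1 :|: K2 by rewrite -EK1 -EK2.
have sep_msep C : N C \subset K1 :|: K2 ->
    {in X & Y, forall x y, (x \in C) != (y \in C)} -> sep (N C) /\ msep S <= #|N C|.
  move=> NC XYC; have sN := sep_nbrs (subset_trans NC KXY) XYC.
  by split; last exact: msep_le sN (disjointWl NC KS).
have XW x : x \in X -> (x \in W1) = false /\ (x \in W2) = false.
  by move=> xX; rewrite !(negbTE (Yside_notinX _ xX)).
have YW y : y \in Y -> (y \in W1) /\ (y \in W2).
  by move=> yY; rewrite !(subsetP (Y_sub_Yside _) y yY).
have [sI _] : sep (N (W1 :&: W2)) /\ msep S <= #|N (W1 :&: W2)|.
  apply: sep_msep; first by rewrite -NW nbrsI_sub.
  by move=> x y /XW [xW1 _] /YW [yW1 yW2]; rewrite !in_setI xW1 yW1 yW2.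
have [_ mU] : sep (N (W1 :|: W2)) /\ msep S <= #|N (W1 :|: W2)|.
  apply: sep_msep; first by rewrite -NW nbrsU_sub.
  by move=> x y /XW [xW1 xW2] /YW [yW1 _]; rewrite !in_setU xW1 xW2 yW1.
have cI : #|N (W1 :&: W2)| <= #|K1|.
  by move: (nbrs_submod W1 W2); rewrite -EK1 -EK2 cK1 cK2; lia.
have WI : Yside (N (W1 :&: W2)) \subset W1 :&: W2.
  by rewrite Yside_nbrs // subsetI !Y_sub_Yside.
have := impK1 _ sI; rewrite properEneq (subset_trans WI (subsetIl _ _)) andbT ltnNge cI.
by case: eqP => [<- _|_ /(_ isT)//]; exact: subset_trans WI (subsetIr _ _).
Qed.

Lemma important_witness_uniq S K1 K2 :
  important_witness e X Y S K1 -> important_witness e X Y S K2 -> K1 = K2.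
Proof.
move=> IW1 IW2; case/andP: (IW1) => _ /andP [mK1 _]; case/andP: (IW2) => _ /andP [mK2 _].
rewrite (minimal_separatorE mK1) (minimal_separatorE mK2); congr (N _).
apply/eqP; rewrite eqEsubset.
by rewrite (important_witness_Yside_sub IW1 IW2) (important_witness_Yside_sub IW2 IW1).
Qed.

Lemma Kof_important_witness S K : important_witness e X Y S K -> Kof e X Y S = Some K.
Proof.
move=> IWK; rewrite /Kof; case: pickP => [K' IWK'|/(_ K)]; last by rewrite IWK.
by rewrite (important_witness_uniq IWK' IWK).
Qed.

Lemma sep_nbrs_avoid D : [disjoint X & Y] -> [disjoint N X & Y] -> D \subset N X ->
  (forall s y, s \in D -> y \in Y -> ~~ e s y) -> sep (N (X :|: D)).
Proof.
move=> XY NXY DX DY; apply: sep_nbrs.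
  apply/subsetP => v /in_nbrs [/[!in_setU] /norP [vX vD] [u /setUP [uX|uD] euv]];
    rewrite !inE negb_or vX /=.
    by rewrite (disjointFr NXY (nbrs_intro uX euv vX)).
  by apply: contraTN euv; exact: DY.
move=> x y xX yY; rewrite in_setU xX /= in_setU (disjointFl XY yY) /=.
by apply: contraTN yY => /(subsetP DX) yN; rewrite (disjointFr NXY yN).
Qed.

Section Greedy.
Variable S : {set T}.
Hypotheses (XY : [disjoint X & Y]) (NXY : [disjoint N X & Y]) (SX : S \subset N X).
Hypothesis SY : forall s y, s \in S -> y \in Y -> ~~ e s y.

Lemma important_witness_subset S' : S' \subset S ->
  exists K, important_witness e X Y S' K.
Proof.
move=> S'S; apply: (important_witness_exists (K0 := N (X :|: S'))).
- exact: subset_trans S'S SX.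
- apply: sep_nbrs_avoid => //; first exact: subset_trans S'S SX.
  by move=> s y /(subsetP S'S); exact: SY.
- exact: disjointWr (subsetUr _ _) (nbrs_disjoint _).
Qed.

Lemma msep_extend S' K s : S' \subset S -> important_witness e X Y S' K ->
  s \in K -> s \in S -> msep S' < msep (s |: S').
Proof.
move=> S'S IWK sK sS; have sS'S : s |: S' \subset S by rewrite subUset sub1set sS.
have [K2 /andP [wK2 iK2]] := important_witness_subset sS'S.
rewrite ltnNge; apply/negP => le.
have EK : K2 = K.
  apply: important_witness_uniq IWK.
  by rewrite /important_witness (witness_sub (subsetUr _ _) le wK2) iK2.
by move: wK2; rewrite witnessE EK => /and3P [_ /disjointFr/(_ sK)]; rewrite setU11.
Qed.

Lemma small_Kof_subset S' : S' \subset S -> #|S'| + rmin e X Y <= msep S' ->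
  exists2 S'' : {set T}, S'' \subset S &
    #|S''| + rmin e X Y <= msep S /\ Kof e X Y S'' = Kof e X Y S.
Proof.
have [n] := ubnP #|S :\: S'|; elim: n S' => // n IH S' ltSn S'S inv.
have [K IWK] := important_witness_subset S'S; have /andP [wK iK] := IWK.
move: (wK); rewrite witnessE => /and3P [_ dKS' /eqP cK].
have [dKS|] := boolP [disjoint K & S].
  have wKS := witness_sup S'S wK dKS.
  move: (wKS); rewrite witnessE => /and3P [_ _ /eqP cKS].
  exists S' => //; split; first by rewrite -cKS cK.
  rewrite (Kof_important_witness IWK) (Kof_important_witness (S := S) (K := K)) //.
  by rewrite /important_witness wKS iK.
rewrite disjoints_subset => /subsetPn [s sK /[!inE] /negbNE sS].
have sS' : s \notin S' by rewrite (disjointFr dKS' sK).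
have lt := msep_extend S'S IWK sK sS.
apply: (IH (s |: S')); last 2 first.
- by rewrite subUset sub1set sS.
- by rewrite cardsU1 sS'; lia.
by move: ltSn; rewrite (cardsD1 s) in_setD sS sS' setUC -setDDl.
Qed.
End Greedy.
End Separators.

Theorem lemma4 (T : finType) (e : rel T) (X Y : {set T})
  (e_sym : symmetric e) (e_irr : irreflexive e) (XY : [disjoint X & Y])
  (Hnorm : normalized e X Y)
  (S : {set T}) (HS : S \subset nbrs e X)
  (HSY : forall s y, s \in S -> y \in Y -> ~~ e s y) :
  exists2 S' : {set T}, S' \subset S &
    (#|S'| <= CE e X Y S) /\ Kof e X Y S' = Kof e X Y S.
Proof.
have sepNX : separator e X Y (nbrs e X).
  by move/forallP/(_ (nbrs e X)): Hnorm; rewrite eqxx => /eqP /andP [].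
have NXY : [disjoint nbrs e X & Y].
  case/andP: sepNX; rewrite -disjoints_subset => /disjointWr + _; apply; exact: subsetUr.
have d0 : [disjoint nbrs e X & set0] by rewrite disjoints_subset setC0 subsetT.
have [K0 /andP [sK0 _] m0] := msep_attained sepNX d0.
have inv : #|set0 : {set T}| + rmin e X Y <= msep e X Y set0 by rewrite cards0 m0 rmin_le.
have [S' S'S [cS' KS']] := small_Kof_subset e_sym XY NXY HS HSY (sub0set S) inv.
by exists S' => //; split => //; rewrite /CE -/(msep e X Y S); lia.
Qed.
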